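(* Let $R$ be a ring and $M$ any $R$-module. There exists an inverse system of $R$-modules $(D_\alpha,g_{\alpha\beta}\mid\alpha\le\beta<\aleph_1)$ indexed by $\aleph_1$ (with the ordinal order) in which every $g_{\alpha\beta}$ is surjective, each $D_\alpha$ is a direct sum of copies of $M$, and $\varprojlim_{\alpha<\aleph_1}D_\alpha=0$. In particular, if $M\neq 0$, this inverse system is Mittag-Leffler but not strict Mittag-Leffler.
   Context: An inverse system $(D_i,g_{ij})$ with inverse limit $(D,g_i)$ is Mittag-Leffler if for each $i$ there is $j\ge i$ with $\operatorname{Im} g_{ij}=\operatorname{Im} g_{ik}$ for all $k\ge j$, and strict Mittag-Leffler if for each $i$ there is $j\ge i$ with $\operatorname{Im} g_{ij}=\operatorname{Im} g_i$. *)

From HB Require Import structures.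
From mathcomp Require Import all_boot all_order all_algebra.
Set Implicit Arguments. Unset Strict Implicit. Unset Printing Implicit Defensive.
Import GRing.Theory.
Local Open Scope ring_scope.

(** A type [A] with a strict relation [lt] has order type omega_1 iff
    [lt] is a strict well-order (irreflexive, transitive, total, well-founded),
    [A] is uncountable and every proper initial segment is countable. *)
Definition countable_set (A : Type) (P : A -> Prop) : Prop :=
  exists f : A -> nat, forall x y, P x -> P y -> f x = f y -> x = y.

Definition is_omega1 (A : Type) (lt : A -> A -> Prop) : Prop :=
  (forall a, ~ lt a a) /\
  (forall a b c, lt a b -> lt b c -> lt a c) /\
  (forall a b, lt a b \/ a = b \/ lt b a) /\
  well_founded lt /\
  ~ countable_set (fun _ : A => True) /\
  (forall a, countable_set (fun b => lt b a)).

Definition ole (A : Type) (lt : A -> A -> Prop) (a b : A) : Prop :=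
  a = b \/ lt a b.

(** * Inverse systems of R-modules indexed by (A, ole lt):
    D : A -> lmodType R, transition maps g a b : D b -> D a for a <= b
    (the value of g a b for a > b is irrelevant). *)
Definition inverse_system (R : pzRingType) (A : Type) (lt : A -> A -> Prop)
  (D : A -> lmodType R) (g : forall a b, {linear D b -> D a}) : Prop :=
  (forall a (x : D a), g a a x = x) /\
  (forall a b c, ole lt a b -> ole lt b c ->
     forall x : D c, g a b (g b c x) = g a c x).

(** Elements of the inverse limit: compatible threads. *)
Definition is_thread (R : pzRingType) (A : Type) (lt : A -> A -> Prop)
  (D : A -> lmodType R) (g : forall a b, {linear D b -> D a})
  (x : forall a, D a) : Prop :=
  forall a b, ole lt a b -> g a b (x b) = x a.

Definition limit_is_zero (R : pzRingType) (A : Type) (lt : A -> A -> Prop)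
  (D : A -> lmodType R) (g : forall a b, {linear D b -> D a}) : Prop :=
  forall x : forall a, D a, is_thread lt g x -> forall a, x a = 0.

(** Images: Im g_{ij} and Im g_i (g_i : lim D -> D_i the canonical map). *)
Definition im_g (R : pzRingType) (A : Type)
  (D : A -> lmodType R) (g : forall a b, {linear D b -> D a})
  (i j : A) (y : D i) : Prop := exists x : D j, g i j x = y.
Arguments im_g {R A D} g i j y.

Definition im_lim (R : pzRingType) (A : Type) (lt : A -> A -> Prop)
  (D : A -> lmodType R) (g : forall a b, {linear D b -> D a})
  (i : A) (y : D i) : Prop :=
  exists x : forall a, D a, is_thread lt g x /\ x i = y.
Arguments im_lim {R A} lt {D} g i y.

Definition mittag_leffler (R : pzRingType) (A : Type) (lt : A -> A -> Prop)
  (D : A -> lmodType R) (g : forall a b, {linear D b -> D a}) : Prop :=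
  forall i, exists j, ole lt i j /\
    forall k, ole lt j k -> forall y : D i, im_g g i j y <-> im_g g i k y.

Definition strict_mittag_leffler (R : pzRingType) (A : Type) (lt : A -> A -> Prop)
  (D : A -> lmodType R) (g : forall a b, {linear D b -> D a}) : Prop :=
  forall i, exists j, ole lt i j /\
    forall y : D i, im_g g i j y <-> im_lim lt g i y.

(** * D is (isomorphic to) a direct sum of copies of M:
    there are an index type I and linear maps e i : M -> D such that the map
    (m_i)_i |-> sum_i e i (m_i) from the finitely supported families
    M^(I) to D is bijective. *)
Definition fin_supp (R : pzRingType) (M : lmodType R) (I : eqType)
  (m : I -> M) (s : seq I) : Prop :=
  uniq s /\ forall i, i \notin s -> m i = 0.

Definition is_direct_sum_of_copies (R : pzRingType) (M D : lmodType R) : Prop :=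
  exists (I : eqType) (e : I -> {linear M -> D}),
    (forall d : D, exists (m : I -> M) (s : seq I),
        fin_supp m s /\ d = \sum_(i <- s) e i (m i)) /\
    (forall (m m' : I -> M) (s s' : seq I),
        fin_supp m s -> fin_supp m' s' ->
        \sum_(i <- s) e i (m i) = \sum_(i <- s') e i (m' i) -> m = m').

From HB Require Import structures.
From mathcomp Require Import all_boot all_order all_algebra.
From mathcomp Require Import boolp functions zify.
Set Implicit Arguments. Unset Strict Implicit. Unset Printing Implicit Defensive.
Import GRing.Theory.

(** For a point [a] of omega_1 let [I_a] be the set of injections of the
    (countable) initial segment below [a] into [nat] whose image has infinite
    complement.  Restriction maps [I_b] onto [I_a] for [a <= b] (a countable
    extension always fits into the unused naturals), but no element of [I_a]
    extends through all of omega_1, which is uncountable.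
    The system is [D_a = M^(I_a)] with maps induced by restriction. *)

Section FinitelySupported.
Variables (R : pzRingType) (M : lmodType R).
Local Open Scope ring_scope.

Definition finsupp (W : eqType) (f : W -> M) : Prop :=
  exists s : seq W, forall w, w \notin s -> f w = 0.

Definition supp (W : eqType) (f : W -> M) : seq W :=
  if pselect (finsupp f) is left fs then undup [seq w <- projT1 (cid fs) | f w != 0]
  else [::].

Lemma supp_uniq (W : eqType) (f : W -> M) : uniq (supp f).
Proof. by rewrite /supp; case: pselect => [fs|//]; apply: undup_uniq. Qed.

Lemma mem_supp (W : eqType) (f : W -> M) : finsupp f ->
  forall w, (w \in supp f) = (f w != 0).
Proof.
move=> fs0 w; rewrite /supp; case: pselect => [fs|//]; case: (cid fs) => s hs /=.
rewrite mem_undup mem_filter andbC; case: (boolP (w \in s)) => // /hs ->.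
by rewrite eqxx.
Qed.

Lemma sum_supp (W : eqType) (f : W -> M) (Q : pred W) (s : seq W) :
  finsupp f -> uniq s -> (forall w, f w != 0 -> w \in s) ->
  \sum_(u <- s | Q u) f u = \sum_(u <- supp f | Q u) f u.
Proof.
move=> fs us cover.
have drop0 (t : seq W) :
    \sum_(u <- t | Q u) f u = \sum_(u <- [seq u <- t | f u != 0] | Q u) f u.
  rewrite big_filter_cond (bigID (fun u => f u != 0)) /= [X in _ + X]big1 ?addr0.
    by apply: eq_bigl => u; rewrite andbC.
  by move=> u /andP[_ /negPn/eqP].
rewrite drop0 [RHS]drop0; apply: perm_big.
apply: uniq_perm; rewrite ?filter_uniq ?supp_uniq // => w.
by rewrite !mem_filter mem_supp //; case: (boolP (f w != 0)) => //= /cover ->.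
Qed.

Definition push (W W' : eqType) (q : W -> W') (f : W -> M) : W' -> M :=
  fun v => \sum_(u <- supp f | q u == v) f u.

Lemma push_neq0 (W W' : eqType) (q : W -> W') f v : finsupp f ->
  push q f v != 0 -> exists2 u, f u != 0 & q u = v.
Proof.
move=> fs; apply: contraNP => none; rewrite /push big_seq_cond big1 // => u.
case/andP=> _ /eqP quv; apply/eqP/negPn/negP => fu.
by apply: none; exists u.
Qed.

Lemma push_finsupp (W W' : eqType) (q : W -> W') f : finsupp f -> finsupp (push q f).
Proof.
move=> fs; exists (map q (supp f)) => v; apply: contraNeq => /(push_neq0 fs)[u fu <-].
by rewrite map_f // mem_supp.
Qed.

Lemma push_ext (W W' : eqType) (q q' : W -> W') f : finsupp f ->
  (forall u, f u != 0 -> q u = q' u) -> push q f = push q' f.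
Proof.
move=> fs qq'; apply/funext => v; rewrite /push big_seq_cond [RHS]big_seq_cond.
by apply: eq_bigl => u; case: (boolP (u \in supp f)) => //; rewrite mem_supp // => /qq' ->.
Qed.

Lemma push_id (W : eqType) (q : W -> W) f : finsupp f ->
  (forall u, f u != 0 -> q u = u) -> push q f = f.
Proof.
move=> fs qid; rewrite (push_ext fs qid); apply/funext => v; rewrite /push.
case: (boolP (v \in supp f)) => [vf|].
  by rewrite -big_filter filter_pred1_uniq ?supp_uniq // big_seq1.
move=> vf; rewrite big_seq_cond big1 => [|u /andP[uf /eqP uv]].
  by apply/esym/eqP; move: vf; rewrite mem_supp // negbK.
by move: vf; rewrite -uv uf.
Qed.

Lemma push_comp (W1 W2 W3 : eqType) (q1 : W1 -> W2) (q2 : W2 -> W3) f : finsupp f ->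
  push q2 (push q1 f) = push (q2 \o q1) f.
Proof.
move=> fs; apply/funext => w; rewrite /push -/(push q1 f).
rewrite -(sum_supp _ (push_finsupp q1 fs) (undup_uniq (map q1 (supp f)))); last first.
  by move=> v /(push_neq0 fs)[u fu <-]; rewrite mem_undup map_f // mem_supp.
rewrite (exchange_big_dep (fun u => q2 (q1 u) == w)) /=; last first.
  by move=> v u /eqP <- /eqP ->.
apply: eq_bigr => u /eqP quw; have [->|fu] := eqVneq (f u) 0; first by rewrite big1.
rewrite (eq_bigl (pred1 (q1 u))) => [|v]; last first.
  by rewrite /= [v == _]eq_sym; apply: andb_idl => /eqP <-; apply/eqP.
by rewrite -big_filter filter_pred1_uniq ?undup_uniq ?big_seq1 // mem_undup map_f ?mem_supp.
Qed.

Lemma finsupp_lin (W : eqType) (k : R) (f g : W -> M) :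
  finsupp f -> finsupp g -> finsupp (k *: f + g).
Proof.
case=> s fs [t gt]; exists (s ++ t) => w; rewrite mem_cat negb_or.
by case/andP=> /fs fw /gt gw; change (k *: f w + g w = 0); rewrite fw gw scaler0 addr0.
Qed.

Lemma push_lin (W W' : eqType) (q : W -> W') (k : R) (f g : W -> M) :
  finsupp f -> finsupp g -> push q (k *: f + g) = k *: push q f + push q g.
Proof.
move=> ff fg; pose s := undup (supp f ++ supp g).
have cover (h : W -> M) : (forall w, h w != 0 -> f w != 0 \/ g w != 0) ->
    forall w, h w != 0 -> w \in s.
  by move=> hfg w /hfg; rewrite mem_undup mem_cat !mem_supp //; case=> ->; rewrite ?orbT.
apply/funext => v; change (push q (k *: f + g) v = k *: push q f v + push q g v).
rewrite /push -(sum_supp _ (finsupp_lin k ff fg) (undup_uniq (supp f ++ supp g))); last first.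
  apply: cover => w; change (k *: f w + g w != 0 -> f w != 0 \/ g w != 0).
  by have [->|] := eqVneq (f w) 0; [rewrite scaler0 add0r; right | left].
rewrite -(sum_supp _ ff (undup_uniq (supp f ++ supp g))); last by apply: cover; left.
rewrite -(sum_supp _ fg (undup_uniq (supp f ++ supp g))); last by apply: cover; right.
by rewrite scaler_sumr -big_split.
Qed.

(** The functions that are finitely supported inside [P] form a submodule of
    [W -> M]: the direct sum [M^(P)] of copies of [M] indexed by [P]. *)
Definition supported_in (W : eqType) (P : W -> Prop) : {pred W -> M} :=
  fun f => `[< finsupp f /\ forall w, ~ P w -> f w = 0 >].

Lemma supported_in_closed (W : eqType) (P : W -> Prop) : submod_closed (supported_in P).
Proof.
split; first by apply/asboolP; split; [exists [::] | ].
move=> k f g /asboolP[ff fP] /asboolP[fg gP]; apply/asboolP; split.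
  exact: finsupp_lin.
by move=> w wP; change (k *: f w + g w = 0); rewrite fP // gP // scaler0 addr0.
Qed.
HB.instance Definition _ (W : eqType) (P : W -> Prop) := GRing.isSubmodClosed.Build
  R (W -> M) (supported_in P) (GRing.submod_closed_semi (supported_in_closed P)).

Inductive msum (W : eqType) (P : W -> Prop) : predArgType :=
  MSum (f : W -> M) & f \in supported_in P.
Definition msum_val (W : eqType) (P : W -> Prop) (x : msum P) : W -> M :=
  let: MSum f _ := x in f.
HB.instance Definition _ (W : eqType) (P : W -> Prop) := [isSub of msum P for @msum_val W P].
HB.instance Definition _ (W : eqType) (P : W -> Prop) := [Choice of msum P by <:].
HB.instance Definition _ (W : eqType) (P : W -> Prop) := [SubChoice_isSubZmodule of msum P by <:].
HB.instance Definition _ (W : eqType) (P : W -> Prop) := [SubZmodule_isSubLmodule of msum P by <:].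

Lemma msum_valP (W : eqType) (P : W -> Prop) (x : msum P) :
  finsupp (msum_val x) /\ forall w, ~ P w -> msum_val x w = 0.
Proof. by case: x => f fP; apply/asboolP. Qed.

Lemma msum_val_neq0 (W : eqType) (P : W -> Prop) (x : msum P) w :
  msum_val x w != 0 -> P w.
Proof.
move=> nz; case: (pselect (P w)) => // /(proj2 (msum_valP x)) x0.
by rewrite x0 eqxx in nz.
Qed.

Definition trunc_on (W : eqType) (P : W -> Prop) (h : W -> M) : W -> M :=
  fun w => if `[< P w >] then h w else 0.

Lemma trunc_on_id (W : eqType) (P : W -> Prop) (h : W -> M) :
  (forall w, ~ P w -> h w = 0) -> trunc_on P h = h.
Proof. by move=> hP; apply/funext => w; rewrite /trunc_on; case: asboolP => // /hP ->. Qed.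

Lemma trunc_push_in (W W' : eqType) (P' : W' -> Prop) (q : W -> W') (f : W -> M) :
  finsupp f -> trunc_on P' (push q f) \in supported_in P'.
Proof.
move=> fs; apply/asboolP; split; last by move=> w wP; rewrite /trunc_on asboolF.
have [s hs] := push_finsupp q fs.
by exists s => w /hs pw; rewrite /trunc_on pw; case: asboolP.
Qed.

Definition induced (W W' : eqType) (P : W -> Prop) (P' : W' -> Prop) (q : W -> W')
  (x : msum P) : msum P' := MSum (trunc_push_in P' q (proj1 (msum_valP x))).

Lemma induced_is_linear (W W' : eqType) (P : W -> Prop) (P' : W' -> Prop) (q : W -> W') :
  linear (@induced W W' P P' q).
Proof.
move=> k x y; apply: val_inj => /=.
rewrite push_lin; [|exact: (proj1 (msum_valP _))..].
by apply/funext => w; rewrite /trunc_on !fctE; case: asboolP; rewrite ?scaler0 ?addr0.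
Qed.
HB.instance Definition _ (W W' : eqType) (P : W -> Prop) (P' : W' -> Prop) (q : W -> W') :=
  GRing.isSemilinear.Build R (msum P) (msum P') _ (@induced W W' P P' q)
    (GRing.semilinear_linear (@induced_is_linear W W' P P' q)).

Lemma induced_id (W : eqType) (P : W -> Prop) (q : W -> W) (x : msum P) :
  (forall u, P u -> q u = u) -> induced P q x = x.
Proof.
move=> qid; apply: val_inj => /=; have [fs xP] := msum_valP x.
by rewrite push_id ?trunc_on_id // => u /msum_val_neq0 /qid.
Qed.

Lemma induced_comp (W1 W2 W3 : eqType) (P1 : W1 -> Prop) (P2 : W2 -> Prop)
  (P3 : W3 -> Prop) (q1 : W1 -> W2) (q2 : W2 -> W3) (q3 : W1 -> W3) (x : msum P1) :
  (forall u, P1 u -> P2 (q1 u)) -> (forall u, P1 u -> q2 (q1 u) = q3 u) ->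
  induced P3 q2 (induced P2 q1 x) = induced P3 q3 x.
Proof.
move=> q1P q123; apply: val_inj => /=; have [fs _] := msum_valP x.
rewrite (@trunc_on_id _ P2 (push q1 (msum_val x))); last first.
  move=> w wP; apply/eqP/negPn/negP => /(push_neq0 fs)[u /msum_val_neq0 uP uw].
  by apply: wP; rewrite -uw; apply: q1P.
by rewrite push_comp // (push_ext (q' := q3) fs) // => u /msum_val_neq0 /q123.
Qed.

Lemma induced_surj (W W' : eqType) (P : W -> Prop) (P' : W' -> Prop)
  (q : W -> W') (sec : W' -> W) :
  (forall v, P' v -> P (sec v) /\ q (sec v) = v) ->
  forall y : msum P', exists x : msum P, induced P' q x = y.
Proof.
move=> secP y; have [fs yP] := msum_valP y.
have secy : push sec (msum_val y) \in supported_in P.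
  apply/asboolP; split; first exact: push_finsupp.
  move=> w wP; apply/eqP/negPn/negP => /(push_neq0 fs)[v /msum_val_neq0 vP vw].
  by apply: wP; rewrite -vw; have [] := secP v vP.
exists (MSum secy); apply: val_inj => /=; rewrite push_comp // push_id ?trunc_on_id //.
by move=> v /msum_val_neq0 /secP[].
Qed.

Lemma msum_val_sum (W : eqType) (P : W -> Prop) (I : Type) (s : seq I) (F : I -> msum P) :
  msum_val (\sum_(i <- s) F i) = \sum_(i <- s) msum_val (F i).
Proof. by elim: s => [|i s IH]; rewrite ?big_nil ?big_cons //= -IH. Qed.

Definition points (W : eqType) (P : W -> Prop) : Type := {w : W | P w}.
HB.instance Definition _ (W : eqType) (P : W -> Prop) := gen_eqMixin (points P).

Lemma points_eq (W : eqType) (P : W -> Prop) (i j : points P) :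
  (sval i == sval j) = (i == j).
Proof. by apply/eqP/eqP => [|-> //]; case: i j => u uP [v vP] /= uv; apply: eq_exist. Qed.

Definition delta (W : eqType) (u : W) (m : M) : W -> M := fun w => if w == u then m else 0.

Lemma delta_in (W : eqType) (P : W -> Prop) (i : points P) (m : M) :
  delta (sval i) m \in supported_in P.
Proof.
apply/asboolP; split; first by exists [:: sval i] => w; rewrite inE /delta => /negPf ->.
by move=> w wP; rewrite /delta; case: eqP => // wi; case: wP; rewrite wi; apply: svalP.
Qed.

Definition inj_at (W : eqType) (P : W -> Prop) (i : points P) (m : M) : msum P :=
  MSum (delta_in i m).

Lemma inj_at_is_linear (W : eqType) (P : W -> Prop) (i : points P) : linear (inj_at i).
Proof.
move=> k m m'; apply: val_inj; apply/funext => w /=; rewrite !fctE /delta.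
by case: eqP; rewrite ?scaler0 ?addr0.
Qed.
HB.instance Definition _ (W : eqType) (P : W -> Prop) (i : points P) :=
  GRing.isSemilinear.Build R M (msum P) _ (inj_at i)
    (GRing.semilinear_linear (inj_at_is_linear i)).

Lemma sum_inj_at (W : eqType) (P : W -> Prop) (m : points P -> M) (s : seq (points P))
  (i : points P) : fin_supp m s ->
  msum_val (\sum_(j <- s) inj_at j (m j)) (sval i) = m i.
Proof.
move=> [us ms]; rewrite msum_val_sum fct_sumE.
under eq_bigr do rewrite [msum_val _]/= /delta points_eq.
rewrite -big_mkcond /=; case: (boolP (i \in s)) => si.
  rewrite (eq_bigl (pred1 i)) => [|j]; last by rewrite /= eq_sym.
  by rewrite -big_filter filter_pred1_uniq ?big_seq1.
rewrite ms // big_seq_cond big1 // => j /andP[sj /eqP ij].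
by move: si; rewrite ij sj.
Qed.

Lemma msum_direct_sum (W : eqType) (P : W -> Prop) : is_direct_sum_of_copies M (msum P).
Proof.
exists (points P : eqType), (fun i => inj_at i : {linear M -> msum P}); split; last first.
  move=> m m' s s' ms m's e; apply/funext => i.
  by rewrite -(sum_inj_at i ms) -(sum_inj_at i m's) e.
move=> d; have [fs dP] := msum_valP d.
pose pt (w : W) : option (points P) :=
  if pselect (P w) is left wP then Some (exist _ w wP) else None.
pose s := undup (pmap pt (supp (msum_val d))).
have ds : fin_supp (fun i : points P => msum_val d (sval i)) s.
  split=> [|i]; first exact: undup_uniq.
  rewrite mem_undup mem_pmap; apply: contraNeq => di; apply/mapP; exists (sval i).
    by rewrite mem_supp.
  rewrite /pt; case: pselect => [|/(_ (svalP i))//].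
  by case: i {di} => u uP /= wP; congr Some; apply: eq_exist.
exists (fun i => msum_val d (sval i)), s; split => //; apply: val_inj; apply/funext => w /=.
case: (pselect (P w)) => [wP|nwP]; first by rewrite -[w]/(sval (exist P w wP)) sum_inj_at.
rewrite dP // msum_val_sum fct_sumE big1 // => i _ /=; rewrite /delta; case: eqP => // wi.
by case: nwP; rewrite wi; apply: svalP.
Qed.
End FinitelySupported.

Lemma coinfinite_enum (X : nat -> Prop) :
  (forall N, exists2 n, (N <= n)%N & ~ X n) ->
  exists e : nat -> nat, [/\ injective e, forall k, ~ X (e k) & forall k, (k <= e k)%N].
Proof.
move=> avoid; pose next N := projT1 (cid2 (avoid N)).
have nextP N : (N <= next N)%N /\ ~ X (next N).
  by rewrite /next; case: (cid2 (avoid N)).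
pose e k := iter k (fun n => next n.+1) (next 0).
have eS k : (e k < e k.+1)%N by apply: (proj1 (nextP _)).
have inc := homo_ltn ltn_trans eS.
exists e; split.
- by move=> i j eij; case: (ltngtP i j) => // /inc; rewrite eij ltnn.
- by case=> [|k]; apply: (proj2 (nextP _)).
- by elim=> // k IH; apply: leq_ltn_trans IH (eS k).
Qed.

Section SegmentInjections.
Variables (A : Type) (lt : A -> A -> Prop).
Hypothesis lt_trans : forall a b c, lt a b -> lt b c -> lt a c.

Definition seg_inj (a : A) (u : A -> option nat) : Prop :=
  [/\ forall b, lt b a <-> u b <> None,
      forall b b' n, u b = Some n -> u b' = Some n -> b = b'
    & forall N, exists2 n, (N <= n)%N & forall b, u b <> Some n].

Definition restr (a : A) (u : A -> option nat) : A -> option nat :=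
  fun b => if `[< lt b a >] then u b else None.

Lemma restr_id a u : seg_inj a u -> restr a u = u.
Proof.
case=> dom _ _; apply/funext => b; rewrite /restr; case: asboolP => // ba.
by case E: (u b) => [n|//]; case: ba; apply/dom; rewrite E.
Qed.

Lemma restr_restr a b u : (forall c, lt c a -> lt c b) -> restr a (restr b u) = restr a u.
Proof. by move=> ab; apply/funext => c; rewrite /restr; case: asboolP => // /ab /asboolT ->. Qed.

Lemma ole_lt a b : ole lt a b -> forall c, lt c a -> lt c b.
Proof. by case=> [<- //|ab] c ca; apply: lt_trans ca ab. Qed.

Lemma ole_trans a b c : ole lt a b -> ole lt b c -> ole lt a c.
Proof. by move=> [-> //|ab] [<-|bc]; right => //; apply: lt_trans ab bc. Qed.

Lemma seg_inj_restr a b u : ole lt a b -> seg_inj b u -> seg_inj a (restr a u).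
Proof.
move=> ab [dom inj coinf]; split.
- by move=> c; rewrite /restr; case: asboolP => ca; split=> // _; apply/dom/(ole_lt ab).
- by move=> c c' n; rewrite /restr; do 2 case: asboolP => _ //; apply: inj.
- move=> N; have [n Nn nfree] := coinf N; exists n => // c.
  by rewrite /restr; case: asboolP.
Qed.

(** Every element of [I_a] extends to an element of [I_b] when [{c | lt c b}]
    is countable: the new points are sent injectively to the even-indexed
    values of an enumeration of the unused naturals, keeping the odd-indexed
    ones unused. *)
Lemma seg_inj_extend a b u : ole lt a b -> countable_set (fun c => lt c b) ->
  seg_inj a u -> exists2 v, seg_inj b v & restr a v = u.
Proof.
case=> [<- _ ua|ab [f f_inj] ua]; first by exists u; last exact: restr_id.
have [dom inj coinf] := ua.
have coinfX N : exists2 n, (N <= n)%N & ~ exists c, u c = Some n.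
  by have [n Nn nfree] := coinf N; exists n => // -[c]; apply: nfree.
have [e [e_inj e_free e_ge]] := coinfinite_enum coinfX.
have e_new c n : u c = Some (e n) -> False by move=> ucn; apply: (e_free n); exists c.
pose v c := if `[< lt c a >] then u c else if `[< lt c b >] then Some (e (2 * f c)) else None.
exists v; last first.
  apply/funext => c; rewrite /restr /v; case: asboolP => // ca.
  by case E: (u c) => [n|//]; case: ca; apply/dom; rewrite E.
split.
- move=> c; rewrite /v; case: asboolP => ca; last by case: asboolP.
  by split=> [_|_]; [apply/dom | apply: lt_trans ca ab].
- move=> c c' n; rewrite /v.
  have [ca|ca] := pselect (lt c a); have [c'a|c'a] := pselect (lt c' a);
    rewrite ?(asboolT ca) ?(asboolF ca) ?(asboolT c'a) ?(asboolF c'a).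
  + exact: inj.
  + by case: asboolP => // _ ucn [] en; rewrite -en in ucn; case: (e_new _ _ ucn).
  + by case: asboolP => // _ [] en uc'n; rewrite -en in uc'n; case: (e_new _ _ uc'n).
  + case: asboolP => // cb; case: asboolP => // c'b [] <- [] /e_inj ff.
    by apply: f_inj => //; lia.
- move=> N; exists (e (2 * N).+1); first by have := e_ge (2 * N).+1; lia.
  move=> c; rewrite /v; case: asboolP => _; first by move/e_new.
  by case: asboolP => // _ [] /e_inj; lia.
Qed.
End SegmentInjections.

Section Omega1.
Variables (A : Type) (lt : A -> A -> Prop).
Hypotheses (lt_trans : forall a b c, lt a b -> lt b c -> lt a c)
  (lt_total : forall a b, lt a b \/ a = b \/ lt b a)
  (seg_countable : forall a, countable_set (fun b => lt b a))
  (uncountable : ~ countable_set (fun _ : A => True)).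

(** There is no largest element: otherwise [A] would be a countable initial
    segment plus one point. *)
Lemma exists_gt c : exists b, lt c b.
Proof.
apply: contrapT => top; apply: uncountable; have [f f_inj] := seg_countable c.
have below b : b <> c -> lt b c.
  by move=> bc; case: (lt_total b c) => [//|[//|cb]]; case: top; exists b.
exists (fun b => if pselect (b = c) is left _ then 0%N else (f b).+1) => b b' _ _.
case: pselect => [->|bc]; case: pselect => [->|b'c] // [] /f_inj; apply; exact: below.
Qed.

Lemma exists_gt2 c d : exists b, lt c b /\ lt d b.
Proof.
have [m cm dm] : exists2 m, ole lt c m & ole lt d m.
  by case: (lt_total c d) => [cd|[<-|dc]]; [exists d; [right|left] | exists c; left | exists c; [left|right]].
have [b mb] := exists_gt m.
have le_lt x : ole lt x m -> lt x b by case=> [-> //|xm]; apply: lt_trans xm mb.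
by exists b; split; apply: le_lt.
Qed.

(** A monotone [nat]-valued function on [A] is bounded: otherwise [A] would
    be the countable union of the initial segments below points where the
    function exceeds [0, 1, 2, ...]. *)
Lemma monotone_bounded (k : A -> nat) :
  (forall a b, ole lt a b -> (k a <= k b)%N) -> exists K, forall b, (k b <= K)%N.
Proof.
move=> k_mono; apply: contrapT => unbounded.
have big K : exists b, (K < k b)%N.
  apply: contrapT => small; apply: unbounded; exists K => b.
  by rewrite leqNgt; apply/negP => Kb; apply: small; exists b.
pose a n := projT1 (cid (big n)).
have aP n : (n < k (a n))%N by rewrite /a; case: (cid (big n)).
pose f n := projT1 (cid (seg_countable (a n))).
have fP n : forall x y, lt x (a n) -> lt y (a n) -> f n x = f n y -> x = y.
  by rewrite /f; case: (cid (seg_countable (a n))).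
have below b : lt b (a (k b)).
  have := aP (k b); case: (lt_total b (a (k b))) => [//|[<-|ab]]; first by rewrite ltnn.
  by rewrite ltnNge k_mono //; right.
apply: uncountable; exists (fun b => pickle (k b, f (k b) b)) => b b' _ _.
by move=> /(pcan_inj pickleK) [] kbb'; rewrite kbb' => /fP; apply=> //; rewrite -kbb'.
Qed.

Lemma monotone_max (k : A -> nat) (a0 : A) :
  (forall a b, ole lt a b -> (k a <= k b)%N) -> exists g, forall b, (k b <= k g)%N.
Proof.
move=> /monotone_bounded [K kK].
pose value n := `[< exists b, k b = n >].
have value_ex : exists n, value n by exists (k a0); apply/asboolP; exists a0.
have value_le n : value n -> (n <= K)%N by move/asboolP=> [b <-].
case: (ex_maxnP value_ex value_le) => n /asboolP[g <-] gmax.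
by exists g => b; apply: gmax; apply/asboolP; exists b.
Qed.

(** There is no coherent family of elements of the [I_b], [b >= g]: it would
    glue to an injection of [A] into [nat]. *)
Lemma no_coherent_seg_injs (g : A) (u : A -> A -> option nat) :
  (forall b, ole lt g b -> seg_inj lt b (u b)) ->
  (forall a b, ole lt g a -> ole lt a b -> restr lt a (u b) = u a) -> False.
Proof.
move=> uP u_restr.
have agree c b1 b2 : lt c b1 -> lt c b2 -> lt g b1 -> lt g b2 -> u b1 c = u b2 c.
  move=> cb1 cb2 gb1 gb2; have [b [b1b b2b]] := exists_gt2 b1 b2.
  have restr_at b' : lt c b' -> lt g b' -> lt b' b -> u b' c = u b c.
    move=> cb' gb' b'b; rewrite -(u_restr b' b); try by right.
    by rewrite /restr asboolT.
  by rewrite (restr_at b1) ?(restr_at b2).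
pose bc c := projT1 (cid (exists_gt2 c g)).
have bcP c : lt c (bc c) /\ lt g (bc c) by rewrite /bc; case: (cid (exists_gt2 c g)).
apply: uncountable; exists (fun c => if u (bc c) c is Some n then n else 0%N) => c c' _ _.
have [b [cb c'b]] := exists_gt2 (bc c) (bc c').
have [[c_bc g_bc] [c'_bc' g_bc']] := (bcP c, bcP c').
have [gb cb' c'b'] : [/\ lt g b, lt c b & lt c' b].
  by split; [apply: lt_trans g_bc cb | apply: lt_trans c_bc cb | apply: lt_trans c'_bc' c'b].
rewrite (agree c (bc c) b) ?(agree c' (bc c') b) //.
have [dom inj _] := uP b (or_intror gb).
case E: (u b c) => [n|]; last by case/dom: cb'.
case E': (u b c') => [n'|]; last by case/dom: c'b'.
by move=> nn'; apply: inj E _; rewrite E' nn'.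
Qed.
End Omega1.

Lemma uniq_map_inj_in (T T' : eqType) (q : T -> T') (t : seq T) :
  uniq (map q t) -> {in t &, injective q}.
Proof.
elim: t => [//|w t IH] /= /andP[qw_t ut] u u'; rewrite !inE.
case/orP=> [/eqP ->|ut_]; case/orP=> [/eqP ->|u't] // quu'.
- by move: qw_t; rewrite quu' map_f.
- by move: qw_t; rewrite -quu' map_f.
- exact: IH.
Qed.

Lemma map_onto_of_size (T T' : eqType) (q : T -> T') (s : seq T') (t : seq T) :
  uniq s -> {subset s <= map q t} -> (size t <= size s)%N ->
  uniq (map q t) /\ map q t =i s.
Proof.
move=> us s_qt; rewrite -(size_map q) => size_le.
have [_ eq_s] := uniq_min_size us s_qt size_le.
by split=> [|w]; [apply: leq_size_uniq us s_qt size_le | rewrite eq_s].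
Qed.

Section Construction.
Variables (R : pzRingType) (M : lmodType R) (A : Type) (lt : A -> A -> Prop).
Hypothesis lt_trans : forall a b c, lt a b -> lt b c -> lt a c.
Local Open Scope ring_scope.

Definition stage (a : A) : lmodType R := msum M (seg_inj lt a).

Definition transition (a b : A) : {linear stage b -> stage a} :=
  induced (seg_inj lt a) (restr lt a).

Lemma stage_direct_sum a : is_direct_sum_of_copies M (stage a).
Proof. exact: msum_direct_sum. Qed.

Lemma transition_id a (x : stage a) : transition a a x = x.
Proof. by apply: induced_id => u; apply: restr_id. Qed.

Lemma transition_comp a b c (x : stage c) : ole lt a b -> ole lt b c ->
  transition a b (transition b c x) = transition a c x.
Proof.
move=> ab bc; apply: induced_comp => u uc; first exact: seg_inj_restr bc uc.
by apply: restr_restr; apply: ole_lt.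
Qed.

Hypothesis seg_countable : forall a, countable_set (fun b => lt b a).

Lemma transition_surj a b : ole lt a b -> forall y : stage a, exists x : stage b, transition a b x = y.
Proof.
move=> ab; pose sec u := if pselect (seg_inj lt a u) is left ua
  then projT1 (cid2 (seg_inj_extend lt_trans ab (seg_countable b) ua)) else u.
apply: (induced_surj (sec := sec)) => u ua; rewrite /sec; case: pselect => // ua'.
by case: (cid2 _).
Qed.

Section ZeroLimit.
Hypotheses (lt_total : forall a b, lt a b \/ a = b \/ lt b a)
  (uncountable : ~ countable_set (fun _ : A => True)).
Variable x : forall a, stage a.
Hypothesis x_thread : is_thread lt transition x.

Let F b := supp (msum_val (x b)).

Lemma mem_F b u : (u \in F b) = (msum_val (x b) u != 0).
Proof. exact/mem_supp/(proj1 (msum_valP _)). Qed.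

Lemma F_restr a b : ole lt a b -> {subset F a <= map (restr lt a) (F b)}.
Proof.
move=> ab v; rewrite mem_F -(x_thread ab) /= /trunc_on; case: asboolP => _; last by rewrite eqxx.
by case/(push_neq0 (proj1 (msum_valP (x b))))=> u xu <-; rewrite map_f // mem_F.
Qed.

Lemma size_F_mono a b : ole lt a b -> (size (F a) <= size (F b))%N.
Proof.
move=> ab; apply: (@leq_trans (size (undup (map (restr lt a) (F b))))).
  by apply: uniq_leq_size (supp_uniq _) _ => v /(F_restr ab); rewrite mem_undup.
by rewrite -(size_map (restr lt a) (F b)) size_undup.
Qed.

Section MaximalStage.
Variable g : A.
Hypothesis g_max : forall b, (size (F b) <= size (F g))%N.

Lemma F_stable a b : ole lt g a -> ole lt a b ->
  uniq (map (restr lt a) (F b)) /\ map (restr lt a) (F b) =i F a.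
Proof.
move=> ga ab; apply: map_onto_of_size (supp_uniq _) (F_restr ab) _.
by rewrite (leq_trans (g_max b)) // size_F_mono.
Qed.

Variable u0 : A -> option nat.
Hypothesis u0F : u0 \in F g.

Lemma lift_exists b : ole lt g b -> exists2 u, u \in F b & restr lt g u = u0.
Proof. by move=> gb; have /mapP[u ub ->] := F_restr gb u0F; exists u. Qed.

Definition lift b : A -> option nat :=
  if pselect (ole lt g b) is left gb then projT1 (cid2 (lift_exists gb)) else fun _ => None.

Lemma liftP b : ole lt g b -> lift b \in F b /\ restr lt g (lift b) = u0.
Proof. by rewrite /lift => gb; case: pselect => // gb'; case: (cid2 _). Qed.

(** The lifts are elements of the [I_b], and they are coherent under
    restriction because lifts over [u0] are unique. *)
Lemma lift_seg_inj b : ole lt g b -> seg_inj lt b (lift b).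
Proof. by move=> /liftP[+ _]; rewrite mem_F => /msum_val_neq0. Qed.

Lemma lift_coherent a b : ole lt g a -> ole lt a b -> restr lt a (lift b) = lift a.
Proof.
move=> ga ab; have gb := ole_trans lt_trans ga ab.
have [inj_g _] := F_stable (or_introl erefl) ga.
have [_ onto_a] := F_stable ga ab.
have [[lift_b_F lift_b_u0] [lift_a_F lift_a_u0]] := (liftP gb, liftP ga).
apply: (uniq_map_inj_in inj_g _ lift_a_F); first by rewrite -onto_a map_f.
by rewrite restr_restr ?lift_b_u0 ?lift_a_u0 //; apply: ole_lt.
Qed.
End MaximalStage.

(** The inverse limit is zero: a nonzero thread would have a stage of
    maximal support, over which the lifts of a support point form a
    coherent family of injections, which cannot exist. *)
Lemma thread_zero a0 : x a0 = 0.
Proof.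
apply: contrapT => /eqP xa0.
have [g g_max] := monotone_max lt_total seg_countable uncountable a0 size_F_mono.
have: (0 < size (F g))%N.
  apply: leq_trans (g_max a0); rewrite lt0n size_eq0; apply: contra xa0 => /eqP Fa0.
  by apply/eqP/val_inj/funext => w /=; apply/eqP; rewrite -[_ == 0]negbK -mem_F Fa0.
case Fg: (F g) => [//|u0 s] _; have u0F : u0 \in F g by rewrite Fg mem_head.
apply: (no_coherent_seg_injs lt_trans lt_total seg_countable uncountable
  (u := lift u0F)) => [b|a b]; [exact: lift_seg_inj | exact: lift_coherent].
Qed.
End ZeroLimit.
End Construction.

Local Open Scope ring_scope.

Lemma surjective_mittag_leffler (R : pzRingType) (A : Type) (lt : A -> A -> Prop)
  (D : A -> lmodType R) (g : forall a b, {linear D b -> D a}) :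
  inverse_system lt g ->
  (forall a b, ole lt a b -> forall y : D a, exists x : D b, g a b x = y) ->
  mittag_leffler lt g.
Proof.
move=> [g_id _] g_surj i; exists i; split=> [|k ik y]; first by left.
by split=> _; [apply: g_surj | exists y; apply: g_id].
Qed.

(** If moreover the limit is zero, a nonzero [y] lies in every [Im g_ij] but
    not in [Im g_i]: the system is not strict Mittag-Leffler. *)
Lemma surjective_zero_limit_not_strict (R : pzRingType) (A : Type) (lt : A -> A -> Prop)
  (D : A -> lmodType R) (g : forall a b, {linear D b -> D a}) (i : A) (y : D i) :
  (forall a b, ole lt a b -> forall y : D a, exists x : D b, g a b x = y) ->
  limit_is_zero lt g -> y <> 0 -> ~ strict_mittag_leffler lt g.
Proof.
move=> g_surj lim0 y_neq0 /(_ i) [j [ij /(_ y) [im_lim _]]].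
have [x [x_thread xy]] := im_lim (g_surj i j ij y).
by apply: y_neq0; rewrite -xy; apply: lim0.
Qed.

Lemma uncountable_inhabited (A : Type) : ~ countable_set (fun _ : A => True) -> exists a : A, True.
Proof.
move=> uncountable; apply: contrapT => empty; apply: uncountable.
by exists (fun _ => 0%N) => a; case: empty; exists a.
Qed.

Lemma exists_minimal (A : Type) (lt : A -> A -> Prop) (a : A) :
  well_founded lt -> exists m, forall b, ~ lt b m.
Proof.
move=> wf; elim/(well_founded_ind wf): a => a IH.
case: (pselect (exists b, lt b a)) => [[b ba]|none]; first exact: IH ba.
by exists a => b ba; apply: none; exists b.
Qed.

(** Below a minimal point the empty map is an element of [I_m], so the stage
    at [m] contains a copy of [M]. *)
Lemma stage_min_neq0 (R : pzRingType) (M : lmodType R) (A : Type) (lt : A -> A -> Prop)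
  (m : A) (m0 : M) : (forall b, ~ lt b m) -> m0 <> 0 -> exists y : stage M lt m, y <> 0.
Proof.
move=> m_min m0_neq0; have empty : seg_inj lt m (fun _ => None).
  by split=> [b|//|N]; [split=> // /m_min | exists N].
exists (inj_at (exist _ _ empty : points _) m0).
by move/(congr1 (fun z => msum_val z (fun _ => None))); rewrite /= /delta eqxx.
Qed.

Unset Implicit Arguments.
Set Strict Implicit.

Theorem mainTheorem3 (R : pzRingType) (M : lmodType R)
  (A : Type) (lt : A -> A -> Prop) (hA : is_omega1 lt) :
  exists (D : A -> lmodType R) (g : forall a b, {linear D b -> D a}),
    [/\ inverse_system lt g,
        (forall a b, ole lt a b -> forall y : D a, exists x : D b, g a b x = y),
        (forall a, is_direct_sum_of_copies M (D a)),
        limit_is_zero lt g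
      & ((exists x : M, x <> 0) ->
           mittag_leffler lt g /\ ~ strict_mittag_leffler lt g)].
Proof.
case: hA => [_ [lt_trans [lt_total [lt_wf [uncountable seg_countable]]]]].
have system : inverse_system lt (transition M lt).
  split=> [a x|a b c ab bc x]; [exact: transition_id | exact: transition_comp].
have surj := transition_surj (M := M) lt_trans seg_countable.
have lim0 : limit_is_zero lt (transition M lt).
  by move=> x x_thread a; apply: (thread_zero lt_trans seg_countable lt_total uncountable x_thread).
exists (stage M lt), (transition M lt); split=> //; first exact: stage_direct_sum.
move=> [m0 m0_neq0]; split; first exact: surjective_mittag_leffler system surj.
have [a0 _] := uncountable_inhabited uncountable.
have [m m_min] := exists_minimal a0 lt_wf.
have [y y_neq0] := stage_min_neq0 m_min m0_neq0.
exact: surjective_zero_limit_not_strict surj lim0 y_neq0.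
Qed.
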